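(* Let $\mathrm{HC}$ be the symmetric operad generated by operations $m^{2p}_{\underline t}$ of arity $t\geqslant2$ and homological degree $2p\geqslant0$, each spanning the trivial representation of $S_t$, with $\overline m_I=\sum_{p\geqslant0}m^{2p}_I$, subject, for each $n\geqslant3$ and pairwise distinct $i,j,j'\in\underline n$, to \[ \sum_{\substack{I\sqcup J=\underline n\\ i\in I;\ j,j'\in J}}\overline m_{I\sqcup\{\star\}}\circ_\star\overline m_J=\sum_{\substack{I\sqcup J=\underline n\\ j\in I;\ i,j'\in J}}\overline m_{I\sqcup\{\star\}}\circ_\star\overline m_J, \] understood degree by degree. Then, for $n\geqslant2$: the element \[ \sum_{\substack{I\sqcup J_1=\underline n\\ j_1,j_2\in J_1}}\overline m_{I\sqcup\{\star\}}\circ_\star\overline m_{J_1} \] does not depend on the choice of distinct $j_1,j_2\in\underline n$; and for each $i\in\underline n$, the element \[ \sum_{\substack{I\sqcup J_1=\underline n\\ j_1\in J_1,\ i\in I}}\overline m_{J_1\sqcup\{\star\}}\circ_\star\overline m_I \] does not depend on the choice of $j_1\in\underline n\setminus\{i\}$. (In all sums only decompositions for which the indicated generators exist, i.e. have arity at least $2$, occur.)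
   Context: Work over a field $\Bbbk$ of characteristic zero, homologically graded vector spaces; $\underline n=\{1,\dots,n\}$. Symmetric operads are species with compositions $\circ_\star:\mathcal P(I\sqcup\{\star\})\otimes\mathcal P(J)\to\mathcal P(I\sqcup J)$; $x_I$ denotes the relabeling of a fully symmetric operation to a set $I$ of the appropriate size; relations are imposed with all relabelings. Identities involving the infinite sums $\overline m$ are to be read as families of identities obtained by separating terms by total homological degree. *)

(* Concrete model of the symmetric operad HC of the paper:
   the free symmetric operad on fully symmetric generators m^{2p}_t (t >= 2)
   is presented by planar rooted trees (leaves labelled by nat, internal
   nodes decorated by p, the generator m^{2p}) modulo reordering of the
   children of a node; the operadic ideal is spanned by the relations grafted
   into arbitrary contexts (and with arbitrary trees grafted on their leaves),
   with all relabelings. *)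
From HB Require Import structures.
From mathcomp Require Import all_boot all_algebra.
Set Implicit Arguments. Unset Strict Implicit. Unset Printing Implicit Defensive.
Import GRing.Theory.
Local Open Scope ring_scope.

(* Leaf l : the identity labelled l;  Node p ch : m^{2p} with inputs ch. *)
Inductive tree : Type := Leaf of nat | Node of nat & seq tree.

Fixpoint leaves (t : tree) : seq nat :=
  match t with Leaf l => [:: l] | Node _ ch => flatten (map leaves ch) end.

Fixpoint graft (f : nat -> tree) (t : tree) : tree :=
  match t with Leaf l => f l | Node p ch => Node p (map (graft f) ch) end.

Fixpoint tree_eqb (a b : tree) : bool :=
  match a, b with
  | Leaf x, Leaf y => x == y
  | Node p l, Node q m => (p == q) && all2 tree_eqb l m
  | _, _ => false
  end.

Inductive tstep : tree -> tree -> Prop :=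
| ts_swap p l a b r :
    tstep (Node p (l ++ a :: b :: r)) (Node p (l ++ b :: a :: r))
| ts_in p l t t' r :
    tstep t t' -> tstep (Node p (l ++ t :: r)) (Node p (l ++ t' :: r)).

(* m^{2p}_{I ⊔ {*}} o_* m^{2q}_J *)
Definition comp2 (p q : nat) (I J : seq nat) : tree :=
  Node p (rcons (map Leaf I) (Node q (map Leaf J))).

Definition part (S : seq nat) (A : {set 'I_(size S)}) : seq nat :=
  [seq nth 0%N S (val k) | k <- enum A].

Section HC.
Variable K : fieldType.

(* vector of the free operad (finitely supported function on trees) *)
Definition vec_of (s : seq (K * tree)) : tree -> K :=
  fun t => \sum_(x <- s) (if tree_eqb x.2 t then x.1 else 0).

(* Degree-2d component of
   sum over I ⊔ A = S with P A, |I| >= 1, |A| >= 2 of  mbar_{I ⊔ *} o_* mbar_A,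
   i.e. sum over p + q = d of m^{2p}_{I ⊔ *} o_* m^{2q}_A. *)
Definition split_terms (S : seq nat) (d : nat)
    (P : {set 'I_(size S)} -> bool) : seq (K * tree) :=
  flatten [seq [seq (1, comp2 p (d - p) (part (~: A)) (part A)) | p <- iota 0 d.+1]
          | A <- enum [set A : {set 'I_(size S)} |
                        [&& P A, (1 <= #|~: A|)%N & (2 <= #|A|)%N]]].

(* degree-2d component of LHS - RHS of the defining relation (labels S) *)
Definition rel_terms (S : seq nat) (d i j j' : nat) : seq (K * tree) :=
  @split_terms S d (fun A => [&& i \in part (~: A), j \in part A & j' \in part A])
  ++ [seq (- x.1, x.2) | x <- @split_terms S d
        (fun A => [&& j \in part (~: A), i \in part A & j' \in part A])].

Inductive hc_gen : (tree -> K) -> Prop :=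
| gen_reorder t t' : tstep t t' -> hc_gen (vec_of [:: (1, t); (-1, t')])
| gen_rel (S : seq nat) (d i j j' h : nat) (C : tree) (f : nat -> tree) :
    uniq S -> i \in S -> j \in S -> j' \in S ->
    i != j -> i != j' -> j != j' ->
    count_mem h (leaves C) = 1%N ->
    hc_gen (vec_of [seq (x.1, graft (fun l => if l == h then graft f x.2
                                             else Leaf l) C)
                   | x <- rel_terms S d i j j']).

(* the operadic ideal (together with the reordering identifications) *)
Inductive hc_span : (tree -> K) -> Prop :=
| hc_span0 : hc_span (fun _ => 0)
| hc_spanD (c : K) (g v : tree -> K) :
    hc_gen g -> hc_span v -> hc_span (fun t => c * g t + v t).

Definition hc_eq (x y : seq (K * tree)) : Prop :=
  hc_span (fun t => vec_of x t - vec_of y t).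

End HC.
Arguments split_terms {K} S d P.
Arguments rel_terms {K} S d i j j'.

(** Write [T(a, b)] for the sum over the decompositions whose inner block
    contains [a] and [b].  For distinct [i, j, j'], split [T(j, j')] according
    to whether [i] is inner and [T(i, j')] according to whether [j] is inner:
    the parts with all three inner coincide, and the remaining parts are the
    two sides of the relation for [i, j, j'].  Hence [T(j, j') = T(i, j')],
    and as [T] is symmetric any pair can be moved to any other.  Similarly,
    with [i] inner, the sums with [j1] outer and with [j1'] outer share the
    part where both are outer, and what remains are the two sides of the
    relation for [j1, j1', i]. *)

From HB Require Import structures.
From mathcomp Require Import all_boot all_algebra.
From Stdlib Require Import FunctionalExtensionality.
Set Implicit Arguments. Unset Strict Implicit.
Import GRing.Theory.
Local Open Scope ring_scope.

Lemma graft_Leaf (t : tree) : graft Leaf t = t.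
Proof.
move: t; fix IH 1; case=> [l|p ch] //=; congr Node.
by elim: ch => //= c ch ->; rewrite IH.
Qed.

Lemma mem_part_ord (S : seq nat) (x : nat) : uniq S -> x \in S ->
  exists k : 'I_(size S), forall A, (x \in part A) = (k \in A).
Proof.
move=> S_uniq Sx; have Sx_lt : (index x S < size S)%N by rewrite index_mem.
exists (Ordinal Sx_lt) => A; apply/mapP/idP => [[k Ak x_k]|Ax].
  have -> : Ordinal Sx_lt = k by apply: val_inj; rewrite /= x_k index_uniq // ltn_ord.
  by rewrite -mem_enum.
by exists (Ordinal Sx_lt); rewrite ?mem_enum //= nth_index.
Qed.

Lemma mem_partC (S : seq nat) (x : nat) (A : {set 'I_(size S)}) :
  uniq S -> x \in S -> (x \in part (~: A)) = (x \notin part A).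
Proof. by move=> S_uniq Sx; have [k x_k] := mem_part_ord S_uniq Sx; rewrite !x_k in_setC. Qed.

Section HCEquality.
Variable K : fieldType.
Implicit Types (x y z : seq (K * tree)) (v w : tree -> K).

Lemma hc_span_ext v w : hc_span v -> v =1 w -> hc_span w.
Proof. by move=> span_v /functional_extensionality <-. Qed.

Lemma hc_span_add v w : hc_span v -> hc_span w -> hc_span (fun t => v t + w t).
Proof.
move=> span_v span_w; elim: span_v => [|c g v' gen_g _ span_vw].
  by apply: hc_span_ext span_w _ => t; rewrite add0r.
by apply: hc_span_ext (hc_spanD c gen_g span_vw) _ => t; rewrite addrA.
Qed.

Lemma hc_eq_vec x y : vec_of x =1 vec_of y -> hc_eq x y.
Proof. by move=> xy; apply: hc_span_ext (hc_span0 K) _ => t; rewrite xy subrr. Qed.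

Lemma hc_eq_trans x y z : hc_eq x y -> hc_eq y z -> hc_eq x z.
Proof.
by move=> xy yz; apply: hc_span_ext (hc_span_add xy yz) _ => t; rewrite addrA subrK.
Qed.

End HCEquality.

Section SplitTerms.
Variables (K : fieldType) (S : seq nat) (d : nat).
Implicit Types (P Q : {set 'I_(size S)} -> bool) (A : {set 'I_(size S)}).

Definition split_vec A (t : tree) : K :=
  \sum_(p <- iota 0 d.+1)
     (if tree_eqb (comp2 p (d - p) (part (~: A)) (part A)) t then 1 else 0).

Definition admissible A := (1 <= #|~: A|)%N && (2 <= #|A|)%N.

Lemma vec_split_terms P t :
  vec_of (split_terms S d P) t =
  \sum_A (if P A && admissible A then split_vec A t else 0).
Proof.
rewrite /vec_of /split_terms big_flatten big_map big_enum big_mkcond.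
by apply: eq_bigr => A _; rewrite in_set; case: ifP; rewrite ?big_map.
Qed.

Lemma hc_eq_split_eq P Q : P =1 Q ->
  hc_eq (split_terms (K:=K) S d P) (split_terms S d Q).
Proof.
by move=> PQ; apply: hc_eq_vec => t; rewrite !vec_split_terms; under eq_bigr do rewrite PQ.
Qed.

Lemma hc_eq_split_indicator P Q P' Q' :
  (forall A, (P A)%:R - (Q A)%:R = (P' A)%:R - (Q' A)%:R :> K) ->
  hc_eq (split_terms (K:=K) S d P') (split_terms S d Q') ->
  hc_eq (split_terms (K:=K) S d P) (split_terms S d Q).
Proof.
move=> PQ_eq /hc_span_ext; apply=> t; rewrite !vec_split_terms -!sumrB.
apply: eq_bigr => A _.
have ifE b : (if b then split_vec A t else 0) = b%:R * split_vec A t.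
  by case: b; rewrite ?mul1r ?mul0r.
by rewrite !ifE -!mulrBl; case: (admissible A); rewrite ?andbT ?andbF ?PQ_eq.
Qed.

End SplitTerms.

Section Relation.
Variables (K : fieldType) (S : seq nat) (d : nat).
Hypothesis S_uniq : uniq S.

Lemma vec_rel_terms i j j' t :
  vec_of (rel_terms (K:=K) S d i j j') t =
  vec_of (split_terms S d
    (fun A => [&& i \in part (~: A), j \in part A & j' \in part A])) t -
  vec_of (split_terms S d
    (fun A => [&& j \in part (~: A), i \in part A & j' \in part A])) t.
Proof.
rewrite /vec_of big_cat big_map -sumrN; congr (_ + _).
by apply: eq_bigr => x _; case: ifP; rewrite ?oppr0.
Qed.

Lemma hc_eq_relation i j j' : i \in S -> j \in S -> j' \in S ->
  i != j -> i != j' -> j != j' ->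
  hc_eq (split_terms (K:=K) S d
           (fun A => [&& i \in part (~: A), j \in part A & j' \in part A]))
        (split_terms S d
           (fun A => [&& j \in part (~: A), i \in part A & j' \in part A])).
Proof.
move=> Si Sj Sj' ij ij' jj'.
have leaf_context : count_mem 0%N (leaves (Leaf 0)) = 1%N by [].
have := @gen_rel K S d i j j' 0 (Leaf 0) Leaf S_uniq Si Sj Sj' ij ij' jj' leaf_context.
rewrite (eq_map (_ : _ =1 id)) ?map_id => [gen_rel_ij|[c t]]; last first.
  by rewrite /= graft_Leaf.
apply: hc_span_ext (hc_spanD 1 gen_rel_ij (hc_span0 K)) _ => t.
by rewrite mul1r addr0 vec_rel_terms.
Qed.

Definition inner_pair_terms a b : seq (K * tree) :=
  split_terms S d (fun A => (a \in part A) && (b \in part A)).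

Definition inner_outer_terms i j : seq (K * tree) :=
  split_terms S d (fun A => (i \in part A) && (j \in part (~: A))).

Lemma inner_pair_termsC a b : hc_eq (inner_pair_terms a b) (inner_pair_terms b a).
Proof. by apply: hc_eq_split_eq => A; rewrite andbC. Qed.

Lemma inner_pair_terms_exchangel i j j' : i \in S -> j \in S -> j' \in S ->
  i != j -> i != j' -> j != j' ->
  hc_eq (inner_pair_terms j j') (inner_pair_terms i j').
Proof.
move=> Si Sj Sj' ij ij' jj'; rewrite /inner_pair_terms.
apply: hc_eq_split_indicator (hc_eq_relation Si Sj Sj' ij ij' jj') => A.
rewrite !mem_partC //.
by case: (i \in part A); case: (j \in part A); case: (j' \in part A);
  rewrite /= ?mulr0n ?mulr1n ?subrr ?subr0 ?sub0r.
Qed.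

Lemma inner_pair_terms_exchanger a b e : a \in S -> b \in S -> e \in S ->
  a != b -> a != e -> hc_eq (inner_pair_terms a b) (inner_pair_terms a e).
Proof.
move=> Sa Sb Se ab ae; have [<-|be] := eqVneq b e; first exact: hc_eq_vec.
apply: hc_eq_trans (inner_pair_termsC _ _) _.
apply: hc_eq_trans (inner_pair_termsC _ _).
by apply: inner_pair_terms_exchangel; rewrite // eq_sym.
Qed.

Lemma inner_pair_terms_connected a b c e :
  a \in S -> b \in S -> c \in S -> e \in S -> a != b -> c != e ->
  hc_eq (inner_pair_terms a b) (inner_pair_terms c e).
Proof.
move=> Sa Sb Sc Se ab ce.
have [ca|ca] := eqVneq c a; first by subst c; exact: inner_pair_terms_exchanger.
have [cb|cb] := eqVneq c b.
  subst c; apply: hc_eq_trans (inner_pair_termsC _ _) _.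
  by apply: inner_pair_terms_exchanger; rewrite // eq_sym.
apply: hc_eq_trans (inner_pair_terms_exchanger Sc Sb Se cb ce).
exact: inner_pair_terms_exchangel.
Qed.

Lemma inner_outer_terms_exchange i j j' : i \in S -> j \in S -> j' \in S ->
  j != i -> j' != i -> hc_eq (inner_outer_terms i j) (inner_outer_terms i j').
Proof.
move=> Si Sj Sj' ji j'i; have [<-|jj'] := eqVneq j j'; first exact: hc_eq_vec.
rewrite /inner_outer_terms.
apply: hc_eq_split_indicator (hc_eq_relation Sj Sj' Si jj' ji j'i) => A.
rewrite !mem_partC //.
by case: (i \in part A); case: (j \in part A); case: (j' \in part A);
  rewrite /= ?mulr0n ?mulr1n ?subrr ?subr0 ?sub0r.
Qed.

End Relation.
Unset Implicit Arguments. Set Strict Implicit.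

Theorem mainTheorem20 (K : fieldType) (hK : [pchar K] =i pred0)
    (n : nat) (hn : (2 <= n)%N) :
  (forall (d j1 j2 j1' j2' : nat),
      j1 \in iota 1 n -> j2 \in iota 1 n -> j1 != j2 ->
      j1' \in iota 1 n -> j2' \in iota 1 n -> j1' != j2' ->
      hc_eq (split_terms (K:=K) (iota 1 n) d
               (fun A => (j1 \in part A) && (j2 \in part A)))
            (split_terms (K:=K) (iota 1 n) d
               (fun A => (j1' \in part A) && (j2' \in part A)))) /\
  (forall (d i j1 j1' : nat),
      i \in iota 1 n -> j1 \in iota 1 n -> j1' \in iota 1 n ->
      j1 != i -> j1' != i ->
      hc_eq (split_terms (K:=K) (iota 1 n) d
               (fun A => (i \in part A) && (j1 \in part (~: A))))
            (split_terms (K:=K) (iota 1 n) d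
               (fun A => (i \in part A) && (j1' \in part (~: A))))).
Proof.
have iota_uniq1n := iota_uniq 1 n.
split=> d *; first exact: inner_pair_terms_connected.
exact: inner_outer_terms_exchange.
Qed.
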